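(* Let $\langle B,\wedge,{}'\rangle$ be an algebra with $\wedge$ binary and ${}'$ unary satisfying $x\wedge(y\wedge z)\approx z\wedge(y\wedge x)$, $x''\approx x$, and $x'\approx (x\wedge y)'\wedge(x\wedge y')'$. Then $x\wedge y=y\wedge x$ for all $x,y\in B$. *)


(* Applying the third axiom with [y] and with [c y] factors [c x] as the
   product of [c (meet x y)] and [c (meet x (c y))] in either order.  With the
   first axiom this lets [c x] move across any product [meet P Q = meet Q P]
   whose factor [Q] has the form [c (meet x t)].  Since
   [meet y (meet y x) = meet x (meet y y)], the factorization of [c y] along
   [meet y x] is of that kind, so complements commute; by involutivity every
   element is a complement. *)

Section MeetComm.

Variables (B : Type) (meet : B -> B -> B) (c : B -> B).

Hypothesis meet_swap : forall x y z : B, meet x (meet y z) = meet z (meet y x).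
Hypothesis compl_involutive : forall x : B, c (c x) = x.
Hypothesis compl_split :
  forall x y : B, c x = meet (c (meet x y)) (c (meet x (c y))).

Lemma compl_split_swap (x y : B) :
  c x = meet (c (meet x (c y))) (c (meet x y)).
Proof.
  rewrite (compl_split x (c y)), compl_involutive; reflexivity.
Qed.

Lemma meet_compl_expand (x y u : B) :
  meet u (c x) = meet (c (meet x y)) (meet (c (meet x (c y))) u).
Proof.
  rewrite (compl_split_swap x y), meet_swap; reflexivity.
Qed.

Lemma meet_compl_expand_swap (x y u : B) :
  meet (c (meet x (c y))) (meet (c (meet x y)) u) = meet u (c x).
Proof.
  rewrite (meet_compl_expand x (c y) u), compl_involutive; reflexivity.
Qed.

Lemma meet_compl_shuffle (x t u : B) :
  meet (c x) (meet u (c (meet x t))) = meet (meet (c (meet x t)) u) (c x).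
Proof.
  rewrite meet_swap, <- (meet_compl_expand_swap x t u).
  symmetry; apply meet_compl_expand.
Qed.

Lemma compl_comm (x y : B) : meet (c x) (c y) = meet (c y) (c x).
Proof.
  set (P := c (meet y (c (meet y x)))).
  set (Q := c (meet y (meet y x))).
  assert (PQ : meet P Q = c y) by (symmetry; apply compl_split_swap).
  assert (QP : meet Q P = c y) by (symmetry; apply compl_split).
  assert (Q_at_x : Q = c (meet x (meet y y))) by (unfold Q; rewrite meet_swap; reflexivity).
  transitivity (meet (c x) (meet P Q)); [rewrite PQ; reflexivity |].
  transitivity (meet (meet Q P) (c x)); [| rewrite QP; reflexivity].
  rewrite Q_at_x; apply meet_compl_shuffle.
Qed.

Lemma meet_comm (x y : B) : meet x y = meet y x.
Proof.
  rewrite <- (compl_involutive x), <- (compl_involutive y).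
  apply compl_comm.
Qed.

End MeetComm.

Theorem corollary7p7 (B : Type) (meet : B -> B -> B) (c : B -> B)
  (H1 : forall x y z : B, meet x (meet y z) = meet z (meet y x))
  (H2 : forall x : B, c (c x) = x)
  (H3 : forall x y : B, c x = meet (c (meet x y)) (c (meet x (c y)))) :
  forall x y : B, meet x y = meet y x.
Proof.
  exact (meet_comm B meet c H1 H2 H3).
Qed.
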